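(* Let $\{f_i\}_{i\in I}$ be a Parseval frame for a Hilbert space $\mathbb H$, let $J\subset I$, $J^c=I\setminus J$, and $f\in\mathbb H$. The following are equivalent: (i) $\sum_{i\in J}|\langle f,f_i\rangle|^2=\|\sum_{i\in J}\langle f,f_i\rangle f_i\|^2$; (ii) $\sum_{i\in J^c}|\langle f,f_i\rangle|^2=\|\sum_{i\in J^c}\langle f,f_i\rangle f_i\|^2$; (iii) $\sum_{i\in J}\langle f,f_i\rangle f_i\perp\sum_{i\in J^c}\langle f,f_i\rangle f_i$; (iv) $f\perp S_JS_{J^c}f$; (v) $S_Jf=S_J^2f$; (vi) $S_JS_{J^c}f=0$.
   Context: A family $\{f_i\}_{i\in I}$ in a Hilbert space $\mathbb H$ is a Parseval frame if $\sum_{i\in I}|\langle f,f_i\rangle|^2=\|f\|^2$ for all $f\in\mathbb H$. For $J\subset I$, $S_Jf=\sum_{i\in J}\langle f,f_i\rangle f_i$. *)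

From HB Require Import structures.
From mathcomp Require Import all_boot all_order all_algebra.
From mathcomp Require Import all_classical all_reals all_analysis.
From mathcomp Require Import complex finmap.
Import Order.TTheory GRing.Theory Num.Theory.
Import numFieldNormedType.Exports.

Set Implicit Arguments.
Unset Strict Implicit.
Unset Printing Implicit Defensive.

Local Open Scope classical_set_scope.
Local Open Scope ring_scope.

(* The filter of finite subsets of I ordered by inclusion ("eventually
   contains every given finite set"): the net used for unordered sums. *)
Definition totally {I : choiceType} : set_system {fset I} :=
  filter_from setT (fun A => [set B | (A `<=` B)%fset]).

Instance totally_filter {I : choiceType} : ProperFilter (@totally I).
Proof.
eapply filter_from_proper; last by move=> A _; exists A; rewrite /= fsubset_refl.
apply: filter_fromT_filter; first by exists fset0.
by move=> A B /=; exists (A `|` B)%fset => P /=; rewrite fsubUset => /andP[].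
Qed.

Definition psum {I : choiceType} {V : zmodType} (J : set I) (x : I -> V)
  (F : {fset I}) : V := \sum_(i <- F | `[< J i >]) x i.

Definition has_sum {I : choiceType} {K : numDomainType} {V : normedModType K}
  (J : set I) (x : I -> V) (s : V) : Prop := psum J x @ totally --> s.

Definition fsum {I : choiceType} {K : numDomainType} {V : normedModType K}
  (J : set I) (x : I -> V) : V := lim (psum J x @ totally).

(* ip is an inner product on V (linear in the first argument, conjugate
   symmetric) inducing the norm of V: |x|^2 = <x,x>.  Together with
   completeness of V this makes V a complex Hilbert space. *)
Definition inner_product {R : realType} {V : normedModType R[i]}
  (ip : V -> V -> R[i]) : Prop :=
  [/\ forall (a : R[i]) (x y z : V), ip (a *: x + y) z = a * ip x z + ip y z,
      forall x y : V, ip x y = (ip y x)^*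
    & forall x : V, `|x| ^+ 2 = ip x x].

Definition parseval_frame {R : realType} {V : normedModType R[i]}
  (ip : V -> V -> R[i]) {I : choiceType} (f : I -> V) : Prop :=
  forall g : V,
    @has_sum I R[i] R[i]^o setT (fun i => `|ip g (f i)| ^+ 2) (`|g| ^+ 2).

Definition frameop {R : realType} {V : normedModType R[i]}
  (ip : V -> V -> R[i]) {I : choiceType} (f : I -> V) (J : set I) (g : V) : V :=
  fsum J (fun i => ip g (f i) *: f i).

(* Write a = S_J g and b = S_{J^c} g; every condition is equivalent to (iii),
   <a, b> = 0.  Polarizing the Parseval identity gives S_J + S_{J^c} = 1, hence
   a + b = g and S_J b = S_{J^c} a; each S_J is self-adjoint and positive, with
   <S_J h, h> = sum_{i in J} |<h, f i>|^2.  So (i) and (ii) read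
   <a, a> + <a, b> = <a, a> and <b, a> + <b, b> = <b, b>, (iv) reads
   <g, S_J b> = <S_J b, g>^* = <a, b> = 0, and (v) reads S_J a + S_J b = S_J a,
   i.e. (vi).  Conversely <a, b> = 0 forces (vi): <S_J b, g> equals
   <S_{J^c} a, a> + <S_J b, b>, a sum of two nonnegative terms, and
   <S_J b, b> = 0 kills every partial sum of S_J b because the synthesis
   operator of a Parseval frame has norm at most 1. *)

From HB Require Import structures.
From mathcomp Require Import all_boot all_order all_algebra.
From mathcomp Require Import all_classical all_reals all_analysis.
From mathcomp Require Import complex finmap ring.
Import Order.TTheory GRing.Theory Num.Theory.
Import numFieldNormedType.Exports.

Local Open Scope classical_set_scope.
Local Open Scope ring_scope.

Section Sesquilinear.
Context {R : realType} {V : lmodType R[i]} {B : V -> V -> R[i]}.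
Hypothesis linB : forall (a : R[i]) (x y z : V), B (a *: x + y) z = a * B x z + B y z.
Hypothesis hermB : forall x y : V, B x y = (B y x)^*.

Lemma sesq0l z : B 0 z = 0.
Proof.
have := linB 1 0 0 z; rewrite scale1r addr0 mul1r => h.
by apply: (addrI (B 0 z)); rewrite addr0 -h.
Qed.

Lemma sesqDl x y z : B (x + y) z = B x z + B y z.
Proof. by rewrite -[x]scale1r linB mul1r scale1r. Qed.

Lemma sesqZl a x z : B (a *: x) z = a * B x z.
Proof. by rewrite -[a *: x]addr0 linB sesq0l addr0. Qed.

Lemma sesqDr x y z : B z (x + y) = B z x + B z y.
Proof. by rewrite hermB sesqDl rmorphD /= -!hermB. Qed.

Lemma sesqZr a x z : B z (a *: x) = a^* * B z x.
Proof. by rewrite hermB sesqZl rmorphM /= -hermB. Qed.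

Lemma sesq_suml (T : Type) (r : seq T) (P : pred T) (F : T -> V) z :
  B (\sum_(i <- r | P i) F i) z = \sum_(i <- r | P i) B (F i) z.
Proof. exact: (big_morph (B^~ z) (fun x y => sesqDl x y z) (sesq0l z)). Qed.

Lemma sesq_diagDZ x z a : B (x + a *: z) (x + a *: z) =
  B x x + a^* * B x z + a * B z x + a * a^* * B z z.
Proof. by rewrite sesqDl !sesqDr sesqZl !sesqZr sesqZl (mulrC a) -mulrA; ring. Qed.

Lemma sesq_polarization x z : B x z *+ 4 =
  B (x + 1 *: z) (x + 1 *: z) - B (x + (-1) *: z) (x + (-1) *: z)
  + 'i * B (x + 'i *: z) (x + 'i *: z) - 'i * B (x + (- 'i) *: z) (x + (- 'i) *: z).
Proof.
rewrite !sesq_diagDZ rmorph1 rmorphN1 rmorphN /= conjCi opprK.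
have ii : 'i * 'i = -1 :> R[i] by rewrite -expr2 sqrCi.
transitivity (B x z * 4 + ('i * 'i + 1) * (B z x * 2 - B x z * 2)).
  by rewrite ii addNr mul0r addr0 mulr_natr.
ring.
Qed.

End Sesquilinear.

Lemma cvg_nneg {T : Type} {F : set_system T} {FF : ProperFilter F}
  {K : numFieldType} {u : T -> K^o} {l : K} :
  u @ F --> (l : K^o) -> (\forall t \near F, 0 <= u t) -> 0 <= l.
Proof.
move=> ul pos.
have normu : (fun t => `|u t| : K^o) @ F --> (`|l| : K^o) by exact: cvg_norm.
have : (fun t => `|u t| : K^o) @ F --> (l : K^o).
  by apply: cvg_trans ul; apply: near_eq_cvg; near=> t; rewrite ger0_norm //; near: t.
by move/(norm_cvg_unique normu) <-.
Unshelve. all: by end_near.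
Qed.

Lemma cvg_polarization {T : Type} {F : set_system T} {FF : Filter F}
    {C : numClosedFieldType} {v q1 q2 q3 q4 : T -> C^o} {l l1 l2 l3 l4 : C} :
  (forall t, v t *+ 4 = q1 t - q2 t + 'i * q3 t - 'i * q4 t) ->
  l *+ 4 = l1 - l2 + 'i * l3 - 'i * l4 ->
  q1 @ F --> (l1 : C^o) -> q2 @ F --> (l2 : C^o) ->
  q3 @ F --> (l3 : C^o) -> q4 @ F --> (l4 : C^o) -> v @ F --> (l : C^o).
Proof.
move=> ev el c1 c2 c3 c4.
have quarterK (y : C) : 4^-1 * (y *+ 4) = y.
  by rewrite -[y *+ 4]mulr_natr mulrCA mulVf ?mulr1 // pnatr_eq0.
have -> : v = (fun t => 4^-1 * (v t *+ 4)) by apply/funext => t; rewrite quarterK.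
rewrite -(quarterK l) el; under eq_fun do rewrite ev.
have cvg_i q m : q @ F --> (m : C^o) -> (fun t => 'i * q t) @ F --> ('i * m : C^o).
  by move=> qm; apply: cvgM => //; exact: cvg_cst.
apply: cvgM; first exact: cvg_cst.
by apply: cvgB; [apply: cvgD; [exact: cvgB | exact: cvg_i] | exact: cvg_i].
Qed.

Section UnconditionalSums.
Context {I : choiceType}.

Lemma psum_split {W : zmodType} (J : set I) (u : I -> W) {A G : {fset I}} :
  (A `<=` G)%fset ->
  psum J u G = psum J u A + psum J u [fset x in G | x \notin A]%fset.
Proof.
move=> AG; rewrite /psum (big_fsetIDcond _ (mem A)); congr (_ + _).
suff -> : [fset x in G | x \in A]%fset = A by [].
apply/fsetP => x; rewrite !inE; apply/andP/idP => [[]//|xA]; split=> //.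
exact: (fsubsetP AG).
Qed.

Lemma psum_setC {W : zmodType} (J : set I) (u : I -> W) (G : {fset I}) :
  psum J u G + psum (~` J) u G = psum setT u G.
Proof.
rewrite /psum [RHS](bigID (fun i => `[< J i >])) /=.
by congr (_ + _); apply: eq_bigl => i; rewrite (@asboolT True) // asbool_neg.
Qed.

Lemma sum_le_psum_setT {C : numDomainType} {d : I -> C} (G : {fset I}) (P : pred I) :
  (forall i, 0 <= d i) -> \sum_(i <- G | P i) d i <= psum setT d G.
Proof.
move=> d0; rewrite /psum [X in _ <= X](bigID P) /=.
have -> : \sum_(i <- G | `[< setT i >] && P i) d i = \sum_(i <- G | P i) d i.
  by apply: eq_bigl => i; rewrite asboolT.
by rewrite lerDl; apply: sumr_ge0.
Qed.

Context {K : numFieldType} {W : normedModType K}.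

Lemma has_sum_unique {J : set I} {u : I -> W} {s t : W} :
  has_sum J u s -> has_sum J u t -> s = t.
Proof. exact: norm_cvg_unique. Qed.

Lemma has_sum_fsum {J : set I} {u : I -> W} {s : W} : has_sum J u s -> fsum J u = s.
Proof. exact: norm_cvg_lim. Qed.

Lemma has_sum_ge0 {J : set I} {u : I -> K^o} {s : K} :
  (forall i, 0 <= u i) -> has_sum J u s -> 0 <= s.
Proof.
move=> u0 /cvg_nneg; apply; apply: nearW => G.
exact: sumr_ge0.
Qed.

Lemma psum_le_has_sum {J : set I} {u : I -> K^o} {s : K} (G : {fset I}) :
  (forall i, 0 <= u i) -> has_sum J u s -> psum J u G <= s.
Proof.
move=> u0 hs; rewrite -subr_ge0.
apply: (cvg_nneg (cvgB hs (cvg_cst (psum J u G)))).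
exists G => // G' /= GG'.
rewrite -[_ G']/(psum J u G' - psum J u G) (psum_split _ _ GG').
by rewrite addrAC subrr add0r; apply: sumr_ge0.
Qed.

Lemma has_sum_conj {C : numClosedFieldType} {J : set I} {u : I -> C^o} {s : C} :
  has_sum J u s -> has_sum J (fun i => (u i)^* : C^o) s^*.
Proof.
move=> /cvgrPdist_lt hs; apply/cvgrPdist_lt => e /hs; apply: filterS => G.
by rewrite /psum -rmorph_sum /= -rmorphB /= norm_conjC.
Qed.

End UnconditionalSums.

Section FrameOperator.
Context {R : realType} {V : completeNormedModType R[i]} {ip : V -> V -> R[i]}.
Hypothesis hip : inner_product ip.

Let ipDZl : forall (a : R[i]) (x y z : V), ip (a *: x + y) z = a * ip x z + ip y z.
Proof. by case: hip. Qed.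
Let ipC : forall x y : V, ip x y = (ip y x)^*.
Proof. by case: hip. Qed.
Let ip_sqnorm : forall x : V, `|x| ^+ 2 = ip x x.
Proof. by case: hip. Qed.
Let ipDl := sesqDl ipDZl.
Let ipZl := sesqZl ipDZl.
Let ipDr := sesqDr ipDZl ipC.
Let ip_suml := sesq_suml ipDZl.
Let ip0l := sesq0l ipDZl.

Lemma cvg_ip {T : Type} {F : set_system T} {FF : Filter F} {u : T -> V} {x : V} (z : V) :
  u @ F --> x -> (fun t => ip (u t) z : R[i]^o) @ F --> (ip x z : R[i]^o).
Proof.
move=> ux.
have cvg_sq (a : R[i]) : (fun t => ip (u t + a *: z) (u t + a *: z) : R[i]^o) @ F -->
    (ip (x + a *: z) (x + a *: z) : R[i]^o).
  rewrite -ip_sqnorm expr2; under eq_fun do rewrite -ip_sqnorm expr2.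
  by apply: cvgM; apply: cvg_norm; apply: cvgD => //; exact: cvg_cst.
apply: (cvg_polarization (fun t => sesq_polarization ipDZl ipC (u t) z)
  (sesq_polarization ipDZl ipC x z)); exact: cvg_sq.
Qed.

Context {I : choiceType} {f : I -> V}.
Hypothesis hf : parseval_frame ip f.

Lemma sqnorm_sum_frame_le (a : I -> R[i]) (G : {fset I}) (P : pred I) :
  `|\sum_(i <- G | P i) a i *: f i| ^+ 2 <= \sum_(i <- G | P i) `|a i| ^+ 2.
Proof.
set x := \sum_(i <- G | P i) a i *: f i.
have ipx : `|x| ^+ 2 = \sum_(i <- G | P i) a i * ip (f i) x.
  by rewrite ip_sqnorm {1}/x ip_suml; apply: eq_bigr => i _; rewrite ipZl.
have le_cross : `|x| ^+ 2 <= \sum_(i <- G | P i) `|a i| * `|ip x (f i)|.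
  rewrite -[X in X <= _]ger0_norm ?exprn_ge0 // ipx.
  apply: le_trans (ler_norm_sum _ _ _) _.
  by apply: ler_sum => i _; rewrite normrM [ip (f i) x]ipC norm_conjC.
have bessel : \sum_(i <- G | P i) `|ip x (f i)| ^+ 2 <= `|x| ^+ 2.
  have sq_ge0 i : 0 <= `|ip x (f i)| ^+ 2 by exact: exprn_ge0.
  exact: le_trans (sum_le_psum_setT G P sq_ge0) (psum_le_has_sum G sq_ge0 (hf x)).
(* AM-GM on each cross term replaces Cauchy-Schwarz. *)
have : `|x| ^+ 2 *+ 2 <= \sum_(i <- G | P i) `|a i| ^+ 2 + `|x| ^+ 2.
  apply: le_trans (_ : (\sum_(i <- G | P i) `|a i| * `|ip x (f i)|) *+ 2 <= _).
    by rewrite lerMn2r.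
  rewrite -sumrMnl; apply: le_trans (_ : \sum_(i <- G | P i)
     (`|a i| ^+ 2 + `|ip x (f i)| ^+ 2) <= _).
    apply: ler_sum => i _.
    exact: (real_leif_mean_square_scaled (normr_real _) (normr_real _)).1.
  by rewrite big_split /= lerD2l.
by rewrite mulr2n lerD2r.
Qed.

Lemma frameop_has_sum J h : has_sum J (fun i => ip h (f i) *: f i) (frameop ip f J h).
Proof.
set u := (fun i => _).
apply: (cauchy_cvg (psum J u @ totally)); apply: cauchy_exP => eps eps0.
set y := (fun i => `|ip h (f i)| ^+ 2).
have eps2 : 0 < eps ^+ 2 / 2 by rewrite divr_gt0 // exprn_gt0.
have [A _ HA] := (cvgrPdist_lt _ _).1 (hf h) _ eps2.
exists (psum J u A); exists A => // G /= AG.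
rewrite -ball_normE /ball_ /= (psum_split _ _ AG) opprD addrA subrr add0r normrN.
set rest := [fset _ in G | _]%fset.
rewrite -(@ltr_pXn2r _ 2) // ?nnegrE //; last exact: ltW.
apply: le_lt_trans (sqnorm_sum_frame_le _ _ _) _.
apply: le_lt_trans (sum_le_psum_setT _ _ (fun i => exprn_ge0 2 (normr_ge0 _))) _.
rewrite -[X in X < _]ger0_norm; last by apply: sumr_ge0 => i _; exact: exprn_ge0.
(* the block [G \ A] is bounded by the difference of two Parseval tails *)
have -> : psum setT y rest = (`|h| ^+ 2 - psum setT y A) - (`|h| ^+ 2 - psum setT y G).
  by rewrite (psum_split _ _ AG) /y; ring.
apply: le_lt_trans (ler_normB _ _) _.
have tail_lt B : (A `<=` B)%fset -> `| `|h| ^+ 2 - psum setT y B| < eps ^+ 2 / 2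
  by exact: HA.
by rewrite [eps ^+ 2]splitr ltrD ?tail_lt ?fsubset_refl.
Qed.

Lemma has_sum_frame_ip {J : set I} {h s : V} (z : V) :
  has_sum J (fun i => ip h (f i) *: f i) s ->
  has_sum J (fun i => ip h (f i) * ip (f i) z : R[i]^o) (ip s z).
Proof.
move=> hs; have := cvg_ip z hs; rewrite /has_sum.
have -> : psum J (fun i => ip h (f i) * ip (f i) z : R[i]^o) =
  (fun G => ip (psum J (fun i => ip h (f i) *: f i) G) z : R[i]^o).
  by apply/funext => G; rewrite /psum ip_suml; apply: eq_bigr => i _; rewrite ipZl.
by apply.
Qed.

Lemma frameop_ip J h z :
  has_sum J (fun i => ip h (f i) * ip (f i) z : R[i]^o) (ip (frameop ip f J h) z).
Proof. exact/has_sum_frame_ip/frameop_has_sum. Qed.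

Lemma frameop_sqsum J h :
  has_sum J (fun i => `|ip h (f i)| ^+ 2 : R[i]^o) (ip (frameop ip f J h) h).
Proof.
rewrite (_ : (fun i => _) = (fun i => ip h (f i) * ip (f i) h)); first exact: frameop_ip.
by apply/funext => i; rewrite normCK -ipC.
Qed.

Lemma frameop_adj J x y : ip (frameop ip f J x) y = (ip (frameop ip f J y) x)^*.
Proof.
apply: (has_sum_unique (frameop_ip J x y)).
rewrite (_ : (fun i => _) = (fun i => (ip y (f i) * ip (f i) x)^*)).
  exact/has_sum_conj/frameop_ip.
by apply/funext => i; rewrite rmorphM /= -!ipC mulrC.
Qed.

Lemma frameopD J x y :
  frameop ip f J (x + y) = frameop ip f J x + frameop ip f J y.
Proof.
apply: has_sum_unique (frameop_has_sum J (x + y)) _.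
rewrite /has_sum (_ : psum J _ = fun G =>
  psum J (fun i => ip x (f i) *: f i) G + psum J (fun i => ip y (f i) *: f i) G).
  by apply: cvgD; exact: frameop_has_sum.
apply/funext => G; rewrite /psum /= -big_split.
by apply: eq_bigr => i _; rewrite ipDl scalerDl.
Qed.

(* Each summand [<x, f i> <f i, y>] is itself a hermitian sesquilinear form, so
   the Parseval identity polarizes termwise. *)
Lemma parseval_ip h z :
  has_sum setT (fun i => ip h (f i) * ip (f i) z : R[i]^o) (ip h z).
Proof.
pose Bi i x y := ip x (f i) * ip (f i) y.
have linBi i (a : R[i]) (x y w : V) : Bi i (a *: x + y) w = a * Bi i x w + Bi i y w.
  by rewrite /Bi ipDZl mulrDl mulrA.
have hermBi i (x y : V) : Bi i x y = (Bi i y x)^*.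
  by rewrite /Bi rmorphM /= -!ipC mulrC.
pose q w := psum setT (fun i => `|ip w (f i)| ^+ 2 : R[i]^o).
have cvg_q w : q w @ totally --> (ip w w : R[i]^o) by rewrite -ip_sqnorm; exact: hf.
apply: (cvg_polarization _ (sesq_polarization ipDZl ipC h z)); try exact: cvg_q.
move=> G; rewrite /q /psum -sumrMnl !mulr_sumr -sumrB -big_split -sumrB /=.
apply: eq_bigr => i _; rewrite !normCK -!ipC.
exact: (sesq_polarization (linBi i) (hermBi i)).
Qed.

Lemma frameop_setC J h : frameop ip f J h + frameop ip f (~` J) h = h.
Proof.
set s := _ + _.
have hs : has_sum setT (fun i => ip h (f i) *: f i) s.
  rewrite /has_sum -(funext (psum_setC J _)).
  by apply: cvgD; exact: frameop_has_sum.
have ip_s z : ip s z = ip h z.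
  exact: has_sum_unique (has_sum_frame_ip z hs) (parseval_ip h z).
have : `|s - h| ^+ 2 = 0.
  by rewrite ip_sqnorm -scaleN1r ipDl ipZl ip_s mulN1r subrr.
by move/eqP; rewrite expf_eq0 /= normr_eq0 subr_eq0 => /eqP.
Qed.

Lemma frameop_ge0 J h : 0 <= ip (frameop ip f J h) h.
Proof. exact: has_sum_ge0 (fun i => exprn_ge0 2 (normr_ge0 _)) (frameop_sqsum J h). Qed.

Lemma frameop_eq0 J h : ip (frameop ip f J h) h = 0 -> frameop ip f J h = 0.
Proof.
move=> sq0; apply: has_sum_unique (frameop_has_sum J h) _.
have psum0 G : psum J (fun i => ip h (f i) *: f i) G = 0.
  have : `|psum J (fun i => ip h (f i) *: f i) G| ^+ 2 <= 0.
    rewrite -sq0; apply: le_trans (sqnorm_sum_frame_le _ _ _) _.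
    exact: psum_le_has_sum (fun i => exprn_ge0 2 (normr_ge0 _)) (frameop_sqsum J h).
  by move=> le0; apply/eqP; rewrite -normr_eq0 -sqrf_eq0 eq_le le0 exprn_ge0.
by rewrite /has_sum (funext psum0); exact: cvg_cst.
Qed.

Section ComplementaryFrameOperators.
Variables (J : set I) (g : V).
Local Notation SJ := (frameop ip f J).
Local Notation SJc := (frameop ip f (~` J)).

Lemma ip_split_setC x : ip x g = ip x (SJ g) + ip x (SJc g).
Proof. by rewrite -ipDr frameop_setC. Qed.

Lemma frameop_comm_setC : SJ (SJc g) = SJc (SJ g).
Proof. by apply: (@addrI _ (SJ (SJ g))); rewrite -frameopD !frameop_setC. Qed.

Lemma frameop_sqsum_iff :
  fsum J (fun i => `|ip g (f i)| ^+ 2 : R[i]^o) = `|SJ g| ^+ 2 <->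
  ip (SJ g) (SJc g) = 0.
Proof.
rewrite (has_sum_fsum (frameop_sqsum J g)) ip_sqnorm ip_split_setC.
by rewrite -{2}[ip (SJ g) (SJ g)]addr0; split=> [/addrI|->].
Qed.

Lemma frameop_sqsum_setC_iff :
  fsum (~` J) (fun i => `|ip g (f i)| ^+ 2 : R[i]^o) = `|SJc g| ^+ 2 <->
  ip (SJ g) (SJc g) = 0.
Proof.
rewrite (has_sum_fsum (frameop_sqsum (~` J) g)) ip_sqnorm ip_split_setC.
rewrite [ip (SJc g) (SJ g)]ipC -{2}[ip (SJc g) (SJc g)]add0r.
by split=> [/addIr/eqP|->]; rewrite ?conjC_eq0 ?rmorph0 // => /eqP.
Qed.

Lemma ip_frameop_mixed_iff : ip g (SJ (SJc g)) = 0 <-> ip (SJ g) (SJc g) = 0.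
Proof. by rewrite ipC frameop_adj conjCK. Qed.

Lemma frameop_mixed_eq0_iff : SJ (SJc g) = 0 <-> ip (SJ g) (SJc g) = 0.
Proof.
have adj := frameop_adj J (SJc g) g.
split=> [mixed0|cross0].
  by move: adj; rewrite mixed0 ip0l => /esym/eqP; rewrite conjC_eq0 => /eqP.
have : ip (SJ (SJc g)) g = 0 by rewrite adj cross0 rmorph0.
rewrite ip_split_setC {1}frameop_comm_setC => /eqP.
rewrite paddr_eq0 ?frameop_ge0 // => /andP[_ /eqP].
exact: frameop_eq0.
Qed.

Lemma frameop_idem_iff : SJ g = SJ (SJ g) <-> SJ (SJc g) = 0.
Proof.
have split_SJ : SJ g = SJ (SJ g) + SJ (SJc g) by rewrite -frameopD frameop_setC.
by rewrite {1}split_SJ -{2}[SJ (SJ g)]addr0; split=> [/addrI|->].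
Qed.

End ComplementaryFrameOperators.

End FrameOperator.

Theorem theorem4p5 (R : realType) (V : completeNormedModType R[i])
  (ip : V -> V -> R[i]) (hip : inner_product ip)
  (I : choiceType) (f : I -> V) (hf : parseval_frame ip f)
  (J : set I) (g : V) :
  [<-> @fsum I R[i] R[i]^o J (fun i => `|ip g (f i)| ^+ 2)
         = `|frameop ip f J g| ^+ 2;
       @fsum I R[i] R[i]^o (~` J) (fun i => `|ip g (f i)| ^+ 2)
         = `|frameop ip f (~` J) g| ^+ 2;
       ip (frameop ip f J g) (frameop ip f (~` J) g) = 0;
       ip g (frameop ip f J (frameop ip f (~` J) g)) = 0;
       frameop ip f J g = frameop ip f J (frameop ip f J g);
       frameop ip f J (frameop ip f (~` J) g) = 0].
Proof.
have i_iii := frameop_sqsum_iff hip hf J g.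
have ii_iii := frameop_sqsum_setC_iff hip hf J g.
have iv_iii := ip_frameop_mixed_iff hip hf J g.
have vi_iii := frameop_mixed_eq0_iff hip hf J g.
have v_vi := frameop_idem_iff hip hf J g.
by tfae=> [/i_iii/ii_iii | /ii_iii | /iv_iii | /iv_iii/vi_iii/v_vi | /v_vi | /vi_iii/i_iii].
Qed.
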